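(* Let $X\subset\mathbb{Z}^n$, let $1\le u\le n$, and let $d$ be an $\ell_p$ metric on $X$ for some $1\le p\le\infty$, so that $(X,d,c_u)$ is a digital metric space. Let $T:X\to X$ be a map such that for some $\alpha>0$, for all $x,y\in X$, $1\le d(x,y)<u^{1/p}+\alpha$ implies $d(T(x),T(y))<1$. If $X$ is $c_u$-connected, then $T$ is constant.
   Context: For distinct $p,q\in\mathbb{Z}^n$, $p$ and $q$ are $c_u$-adjacent if $|p_i-q_i|=1$ for at most $u$ indices $i$ and $p_j=q_j$ for all other indices $j$. $X$ is $c_u$-connected if the graph on $X$ with edges given by $c_u$-adjacency is connected. The $\ell_p$ metric is $d(x,y)=(\sum_i|x_i-y_i|^p)^{1/p}$ for $1\le p<\infty$ and $\max_i|x_i-y_i|$ for $p=\infty$ (with $u^{1/\infty}=1$). *)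

From HB Require Import structures.
From mathcomp Require Import all_boot all_order all_algebra.
From mathcomp Require Import reals exp.
Set Implicit Arguments. Unset Strict Implicit. Unset Printing Implicit Defensive.
Import Order.TTheory GRing.Theory Num.Theory.
Local Open Scope ring_scope.

Definition pt (n : nat) := {ffun 'I_n -> int}.

Definition cadj (n u : nat) : rel (pt n) := fun x y =>
  [&& x != y, [forall i, `|x i - y i| <= 1] & (#|[pred i | x i != y i]| <= u)%N].

Definition cconnected (n u : nat) (X : pt n -> Prop) : Prop :=
  forall x y, X x -> X y ->
    exists s : seq (pt n), (forall z, z \in s -> X z) /\ path (cadj u) x s /\ last x s = y.

Inductive pexp (R : realType) := PFin of R | PInf.
Arguments PInf {R}.

Definition valid_pexp (R : realType) (p : pexp R) : Prop :=
  match p with PFin q => 1 <= q | PInf => True end.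

Definition dist_lp (R : realType) (n : nat) (p : pexp R) (x y : pt n) : R :=
  match p with
  | PFin q => (\sum_(i < n) (`|(x i - y i)%:~R| : R) `^ q) `^ q^-1
  | PInf => \big[Num.max/0]_(i < n) (`|(x i - y i)%:~R| : R)
  end.

Definition root_p (R : realType) (p : pexp R) (u : nat) : R :=
  match p with PFin q => (u%:R : R) `^ q^-1 | PInf => 1 end.

From HB Require Import structures.
From mathcomp Require Import all_boot all_order all_algebra.
From mathcomp Require Import reals exp.
Set Implicit Arguments. Unset Strict Implicit.
Import Order.TTheory GRing.Theory Num.Theory.
Local Open Scope ring_scope.

(* Two distinct lattice points are at l_p distance at least 1, while c_u-adjacent
   points are at distance at most u^(1/p). Hence the hypothesis on T applies to
   every pair of adjacent points and gives d(T x, T y) < 1, i.e. T x = T y; so T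
   is constant along c_u-paths. *)

Lemma intr_norm_ge1 (R : realType) (z : int) : z != 0 -> 1 <= (`|z%:~R| : R).
Proof. by move=> z0; rewrite -intr_norm ler1z; case: z z0 => [[|k]|k]. Qed.

Lemma intr_norm_le1 (R : realType) (z : int) :
  `|z| <= 1 -> (`|z%:~R| : R) = (z != 0)%:R.
Proof. by rewrite -intr_norm; case: z => [[|[|k]]|[|k]]. Qed.

Lemma pt_neqP n (x y : pt n) : reflect (exists i, x i != y i) (x != y).
Proof.
apply: (iffP idP) => [xy | [i xyi]]; last by apply: contraNneq xyi => ->.
apply/existsP; apply: contraR xy => /existsPn xy.
by apply/eqP/ffunP => i; apply/eqP; have := xy i; rewrite negbK.
Qed.

Lemma sum_neq_card (R : realType) n (x y : pt n) :
  \sum_(i < n) ((x i != y i)%:R : R) = #|[pred i | x i != y i]|%:R.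
Proof.
rewrite -sum1_card natr_sum [RHS]big_mkcond; apply: eq_bigr => i _.
by rewrite inE; case: (x i != y i).
Qed.

Section LpDistance.

Variables (R : realType) (n : nat) (p : pexp R).
Hypothesis p_valid : valid_pexp p.

Lemma dist_lp_ge1 (x y : pt n) : x != y -> 1 <= dist_lp p x y.
Proof.
case/pt_neqP=> i xyi.
have xyi_ge1 : 1 <= (`|(x i - y i)%:~R| : R).
  by apply: intr_norm_ge1; rewrite subr_eq0.
rewrite /dist_lp; case: p p_valid => [q q_ge1 | _]; last first.
  exact: le_trans xyi_ge1 (le_bigmax 0 (fun j => `|(x j - y j)%:~R|) i).
have q_gt0 : 0 < q by apply: lt_le_trans ltr01 q_ge1.
have sum_ge1 : 1 <= \sum_(j < n) (`|(x j - y j)%:~R| : R) `^ q.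
  rewrite (bigD1 i) //=.
  apply: le_trans xyi_ge1 (le_trans (le1r_powR xyi_ge1 q_ge1) _).
  by rewrite lerDl; apply: sumr_ge0 => j _; exact: powR_ge0.
have q_inv_ge0 : 0 <= q^-1 by rewrite invr_ge0 ltW.
by have := ler_powR sum_ge1 q_inv_ge0; rewrite powRr0.
Qed.

Lemma dist_lp_lt1_eq (x y : pt n) : dist_lp p x y < 1 -> x = y.
Proof.
by move=> d_lt1; apply/eqP; apply: contraLR d_lt1; rewrite -leNgt; exact: dist_lp_ge1.
Qed.

Lemma dist_lp_cadj_le (u : nat) (x y : pt n) :
  cadj u x y -> dist_lp p x y <= root_p p u.
Proof.
case/and3P=> _ /forallP xy_le1 card_le.
have xy_ind i : (`|(x i - y i)%:~R| : R) = (x i != y i)%:R.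
  by rewrite intr_norm_le1 ?xy_le1 // subr_eq0.
rewrite /dist_lp /root_p; case: p p_valid => [q q_ge1 | _]; last first.
  by apply/bigmax_leP; split=> // i _; rewrite xy_ind; case: (x i != y i).
have q_gt0 : 0 < q by apply: lt_le_trans ltr01 q_ge1.
have q_inv_ge0 : 0 <= q^-1 by rewrite invr_ge0 ltW.
apply: ge0_ler_powR; rewrite // ?nnegrE ?ler0n //.
  by apply: sumr_ge0 => j _; exact: powR_ge0.
apply: (@le_trans _ _ (\sum_(j < n) ((x j != y j)%:R : R))).
  apply: ler_sum => j _; rewrite xy_ind.
  by case: (x j != y j); rewrite ?powR1 ?powR0 ?gt_eqF.
by rewrite sum_neq_card ler_nat.
Qed.

End LpDistance.

Lemma path_last_eq (T : eqType) (U : Type) (e : rel T) (P : T -> Prop)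
    (f : T -> U) (x : T) (s : seq T) :
  (forall a b, P a -> P b -> e a b -> f a = f b) ->
  P x -> (forall z, z \in s -> P z) -> path e x s -> f (last x s) = f x.
Proof.
move=> f_e; elim: s x => [//|z s IHs] x Px Ps /= /andP[exz pzs].
have Pz : P z by apply: Ps; rewrite mem_head.
rewrite IHs // ?(f_e x z) // => w ws.
by apply: Ps; rewrite inE ws orbT.
Qed.

Lemma cconnected_const n u (X : pt n -> Prop) (U : Type) (f : pt n -> U) :
  (forall x y, X x -> X y -> cadj u x y -> f x = f y) ->
  cconnected u X -> forall x y, X x -> X y -> f x = f y.
Proof.
move=> f_adj X_conn x y Xx Xy.
have [s [Xs [xs <-]]] := X_conn x y Xx Xy.
exact/esym/(path_last_eq f_adj Xx Xs xs).
Qed.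

Theorem proposition8p5 (R : realType) (n u : nat) (X : pt n -> Prop)
  (p : pexp R) (T : pt n -> pt n) (alpha : R) :
  (1 <= u)%N -> (u <= n)%N -> valid_pexp p ->
  (forall x, X x -> X (T x)) ->
  0 < alpha ->
  (forall x y, X x -> X y ->
     1 <= dist_lp p x y -> dist_lp p x y < root_p p u + alpha ->
     dist_lp p (T x) (T y) < 1) ->
  cconnected u X ->
  forall x y, X x -> X y -> T x = T y.
Proof.
move=> _ _ p_valid _ alpha_gt0 T_contr.
apply: cconnected_const => x y Xx Xy xy_adj.
apply: (dist_lp_lt1_eq p_valid); apply: T_contr => //.
  by apply: dist_lp_ge1 => //; case/andP: xy_adj.
by apply: le_lt_trans (dist_lp_cadj_le p_valid xy_adj) _; rewrite ltrDl.
Qed.
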